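(* Let $f$ be a stable update function. For every $\delta>0$ there exists $0<c_0<1$ such that the following holds: if $\vec u_i,\vec u_j\in\mathbb S^{d-1}$ have effective angle $\gamma=\gamma(\vec u_i,\vec u_j)\le\frac{\pi}{2}-\delta$, and $\vec u_i'=\vec w/\|\vec w\|$ with $\vec w=\vec u_i+f(\langle\vec u_i,\vec u_j\rangle)\vec u_j$, then the new effective angle $\gamma'=\gamma(\vec u_i',\vec u_j)$ satisfies $\gamma'\le c_0\gamma$.
   Context: $f:[-1,1]\to\mathbb R$ is stable if continuous and $\operatorname{sign}f(A)=\operatorname{sign}A$ for all $A\in[-1,1]$. The angle is $\alpha(\vec u,\vec v)=\arccos\langle\vec u,\vec v\rangle\in[0,\pi]$ and the effective angle is $\gamma(\vec u,\vec v)=\min(\alpha(\vec u,\vec v),\pi-\alpha(\vec u,\vec v))$. *)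

From HB Require Import structures.
From mathcomp Require Import all_boot all_order all_algebra.
From mathcomp Require Import all_classical all_reals all_analysis.
Set Implicit Arguments. Unset Strict Implicit. Unset Printing Implicit Defensive.
Import Order.TTheory GRing.Theory Num.Theory.
Import numFieldNormedType.Exports.
Local Open Scope ring_scope.
Local Open Scope classical_set_scope.

Definition dotp {R : realType} {d : nat} (u v : 'rV[R]_d) : R := (u *m v^T) 0 0.

Definition enorm {R : realType} {d : nat} (u : 'rV[R]_d) : R := Num.sqrt (dotp u u).

Definition on_sphere {R : realType} {d : nat} (u : 'rV[R]_d) : Prop := dotp u u = 1.

(* stable update function f : [-1,1] -> R (given as a function on R, only its
   values on [-1,1] matter): continuous on [-1,1] and sign f(A) = sign A *)
Definition stable {R : realType} (f : R -> R) : Prop :=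
  {within `[-1, 1], continuous f} /\
  (forall A : R, -1 <= A <= 1 -> Num.sg (f A) = Num.sg A).

Definition angle {R : realType} {d : nat} (u v : 'rV[R]_d) : R := acos (dotp u v).
Definition eff_angle {R : realType} {d : nat} (u v : 'rV[R]_d) : R :=
  Num.min (angle u v) (pi - angle u v).

(* The effective angle between unit vectors u, v is acos |<u,v>|.  Away from
   orthogonality, |<u_i,u_j>| >= s > 0, and by compactness and the sign condition
   the update coefficient F = f(<u_i,u_j>) has the sign of <u_i,u_j> and
   |F| >= m > 0.  Writing A = <u_i,u_j>, the new inner product is
   A' = (A + F) / sqrt (1 + 2AF + F^2), so that
   sin^2 gamma' = 1 - A'^2 = (1 - A^2) / (1 + 2AF + F^2) <= k^2 sin^2 gamma
   with k = 1 / sqrt (1 + m^2) < 1.  Concavity of sin on [0, pi/2] gives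
   k sin gamma <= sin (k gamma), hence gamma' <= k gamma. *)
From HB Require Import structures.
From mathcomp Require Import all_boot all_order all_algebra.
From mathcomp Require Import all_classical all_reals all_analysis.
From mathcomp Require Import lra ring.
Import Order.TTheory GRing.Theory Num.Theory.
Import numFieldNormedType.Exports.
Local Open Scope ring_scope.
Set Implicit Arguments. Unset Strict Implicit.

Section InnerProduct.
Variables (R : realType) (d : nat).
Implicit Types u v w : 'rV[R]_d.

Lemma dotpE u v : dotp u v = \sum_j u 0 j * v 0 j.
Proof. by rewrite /dotp mxE; apply: eq_bigr => j _; rewrite mxE. Qed.

Lemma dotpC u v : dotp u v = dotp v u.
Proof. by rewrite !dotpE; apply: eq_bigr => j _; rewrite mulrC. Qed.

Lemma dotpDl u v w : dotp (u + v) w = dotp u w + dotp v w.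
Proof. by rewrite !dotpE -big_split; apply: eq_bigr => j _; rewrite mxE mulrDl. Qed.

Lemma dotpZl a u w : dotp (a *: u) w = a * dotp u w.
Proof. by rewrite !dotpE mulr_sumr; apply: eq_bigr => j _; rewrite mxE mulrA. Qed.

Lemma dotpDr u v w : dotp w (u + v) = dotp w u + dotp w v.
Proof. by rewrite dotpC dotpDl !(dotpC w). Qed.

Lemma dotpZr a u w : dotp w (a *: u) = a * dotp w u.
Proof. by rewrite dotpC dotpZl (dotpC w). Qed.

Lemma dotpp_ge0 u : 0 <= dotp u u.
Proof. by rewrite dotpE; apply: sumr_ge0 => j _; rewrite -expr2 sqr_ge0. Qed.

Lemma dotp_sphere_itv u v : on_sphere u -> on_sphere v -> -1 <= dotp u v <= 1.
Proof.
move=> hu hv; have := dotpp_ge0 (u + (- dotp u v) *: v).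
rewrite dotpDl !dotpDr !dotpZl !dotpZr (dotpC v u) hu hv -ler_norml => h.
have := real_normK (num_real (dotp u v)); have := normr_ge0 (dotp u v); nra.
Qed.

End InnerProduct.

Section Trigonometry.
Variable R : realType.
Implicit Types a c k t x : R.

Lemma pihalf_lepi : pi / 2 <= pi :> R.
Proof. by rewrite ler_pdivrMr // ler_peMr ?pi_ge0 // ler1n. Qed.

Lemma acos_le_pihalf a : 0 <= a <= 1 -> acos a <= pi / 2.
Proof.
move=> /andP[a0 a1]; have ar : -1 <= a <= 1 by rewrite a1 andbT (le_trans _ a0).
rewrite leNgt; apply/negP => a_gt.
have : cos (acos a) < cos (pi / 2).
  by rewrite ltr_cos ?in_itv /= ?acos_ge0 ?acos_lepi ?pihalf_lepi ?divr_ge0 ?pi_ge0.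
by rewrite acosK ?in_itv // cos_pihalf ltNge a0.
Qed.

Lemma cos_le_of_acos_le a t : -1 <= a <= 1 -> 0 <= t <= pi -> acos a <= t ->
  cos t <= a.
Proof.
move=> ar tr; rewrite leNgt => /negbTE acos_gt.
rewrite leNgt -[a in a < _]acosK ?in_itv // ltr_cos ?acos_gt //.
by rewrite in_itv /= acos_ge0 ?acos_lepi.
Qed.

Lemma eff_angle_sphere d (u v : 'rV[R]_d) : on_sphere u -> on_sphere v ->
  eff_angle u v = acos `|dotp u v|.
Proof.
move=> hu hv; have uv := dotp_sphere_itv hu hv; rewrite /eff_angle /angle.
have [uv0|uv0] := leP 0 (dotp u v).
  rewrite ger0_norm //; apply/min_idPl.
  have : acos (dotp u v) <= pi / 2 by rewrite acos_le_pihalf ?uv0; case/andP: uv.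
  lra.
rewrite ltr0_norm // acosN //; apply/min_idPr.
have : acos (- dotp u v) <= pi / 2.
  by rewrite acos_le_pihalf // oppr_ge0 ltW //= lerNl; case/andP: uv.
rewrite acosN //; lra.
Qed.

Lemma is_derive_sin_scale_gap c t : is_derive t 1 (fun x => sin (c * x) - c * sin x)
   (c * cos (c * t) - c * cos t).
Proof.
have hcx := is_derive1_comp (is_derive_sin ((c \*: id) t))
  (is_deriveZ c (@is_derive_id _ R t 1)).
have hcsin : is_derive t 1 (c \*: sin) (c *: cos t) by exact: is_deriveZ.
have -> : (fun x => sin (c * x) - c * sin x) = (sin \o (c \*: id)) - c \*: sin.
  exact/funext.
apply: (is_derive_eq (is_deriveB hcx hcsin)).
by rewrite /= /GRing.scale /= mulr1 mulrC.
Qed.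

Lemma mul_sin_le_sin_mul c x : 0 <= c <= 1 -> 0 <= x <= pi / 2 ->
  c * sin x <= sin (c * x).
Proof.
move=> /andP[c0 c1] /andP[x0 xp]; rewrite -subr_ge0.
pose gap x := sin (c * x) - c * sin x.
suff : gap 0 <= gap x by rewrite /gap !mulr0 sin0 mulr0 subr0.
apply: (@ger0_derive1_ndecr _ gap 0 (pi / 2)) => //.
- move=> y; rewrite in_itv /= => /andP[y0 yp].
  rewrite derive1E /gap; have [_ ->] := is_derive_sin_scale_gap c y.
  rewrite -mulrBr mulr_ge0 // subr_ge0.
  have cy : c * y <= y by rewrite ler_piMl // ltW.
  have [->|cy_neq] := eqVneq (c * y) y; first by [].
  rewrite ltW // ltr_cos ?in_itv /= ?mulr_ge0 ?(ltW y0) ?(le_trans cy) //;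
    rewrite ?(le_trans (ltW yp) pihalf_lepi) //.
  by rewrite lt_neqAle cy_neq cy.
- apply: continuous_subspaceT => z.
  have [dh _] := is_derive_sin_scale_gap c z.
  exact/differentiable_continuous/derivable1_diffP.
Qed.

Lemma acos_itv_pihalf a : 0 <= a <= 1 -> 0 <= acos a <= pi / 2.
Proof.
move=> ar; rewrite acos_le_pihalf // andbT acos_ge0 //.
by case/andP: ar => a0 ->; rewrite andbT (le_trans _ a0).
Qed.

Lemma acos_le_scale a a' k : 0 <= a <= 1 -> 0 <= a' <= 1 -> 0 <= k <= 1 ->
  1 - a' ^+ 2 <= k ^+ 2 * (1 - a ^+ 2) -> acos a' <= k * acos a.
Proof.
move=> ar ar' kr hsin; have [k0 k1] := andP kr.
have /andP[th0 thp] := acos_itv_pihalf ar.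
have /andP[th0' thp'] := acos_itv_pihalf ar'.
have in_pihalf x : 0 <= x <= pi / 2 -> x \in `[- (pi / 2), pi / 2].
  case/andP=> x0 xp; rewrite in_itv /= xp andbT (le_trans _ x0) //.
  by rewrite oppr_le0 divr_ge0 ?pi_ge0.
have kth : 0 <= k * acos a <= pi / 2.
  by rewrite mulr_ge0 //= (le_trans _ thp) // ler_piMl.
have sin_le : sin (acos a') <= sin (k * acos a).
  apply: le_trans (mul_sin_le_sin_mul kr (acos_itv_pihalf ar)).
  have itv1 b : 0 <= b <= 1 -> -1 <= b <= 1.
    by case/andP=> b0 ->; rewrite andbT (le_trans _ b0).
  rewrite !sin_acos ?itv1 // -[k in k * _](ger0_norm k0) -sqrtr_sqr.
  rewrite -sqrtrM ?sqr_ge0 // ler_sqrt // mulr_ge0 ?sqr_ge0 // subr_ge0.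
  by case/andP: ar => a0 a1; rewrite expr_le1.
by rewrite leNgt -(ltr_sin (in_pihalf _ kth)) ?in_pihalf ?th0' // -leNgt.
Qed.

End Trigonometry.

Section Update.
Variable R : realType.
Implicit Types A F m : R.

Lemma inv_sqrt1Dsqr_itv m : 0 < m -> 0 < (Num.sqrt (1 + m ^+ 2))^-1 < 1.
Proof.
move=> m0; have m2 : 0 < 1 + m ^+ 2 by rewrite ltr_wpDr ?sqr_ge0.
rewrite invr_gt0 sqrtr_gt0 m2 /= invf_lt1 ?sqrtr_gt0 //.
by rewrite -[X in X < _](sqrtr1 R) ltr_sqrt //; have := sqr_ge0 m; nra.
Qed.

(* <u_i', u_j> in terms of A = <u_i, u_j> and F = f A, for unit u_i, u_j. *)
Definition updated_dotp A F : R := (A + F) / Num.sqrt (1 + 2 * A * F + F ^+ 2).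

Lemma updated_denom_gt0 A F : 0 <= A * F -> 0 < 1 + 2 * A * F + F ^+ 2.
Proof. by move=> AF; have := sqr_ge0 F; nra. Qed.

Lemma subr1_sqr_updated_dotp A F : 0 <= A * F ->
  1 - updated_dotp A F ^+ 2 = (1 - A ^+ 2) / (1 + 2 * A * F + F ^+ 2).
Proof.
move=> AF; have W0 := updated_denom_gt0 AF.
rewrite /updated_dotp exprMn exprVn sqr_sqrtr ?ltW //.
apply: (@mulIf _ (1 + 2 * A * F + F ^+ 2)); first by rewrite gt_eqF.
by rewrite mulrBl !mulfVK ?gt_eqF // mul1r; ring.
Qed.

Lemma acos_updated_dotp_le A F m : -1 <= A <= 1 -> 0 < m -> m <= `|F| ->
  0 <= A * F ->
  acos `|updated_dotp A F| <= (Num.sqrt (1 + m ^+ 2))^-1 * acos `|A|.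
Proof.
move=> Ar m0 mF AF; have W0 := updated_denom_gt0 AF.
have := subr1_sqr_updated_dotp AF.
set W := 1 + 2 * A * F + F ^+ 2 in W0 *; set k := (Num.sqrt (1 + m ^+ 2))^-1.
set A' := updated_dotp A F => key.
have mW : 1 + m ^+ 2 <= W.
  have : m ^+ 2 <= F ^+ 2.
    by rewrite -[F ^+ 2]real_normK ?num_real //; have := normr_ge0 F; nra.
  rewrite /W; nra.
have m2 : 0 < 1 + m ^+ 2 by rewrite ltr_wpDr ?sqr_ge0.
have k2 : k ^+ 2 = (1 + m ^+ 2)^-1 by rewrite exprVn sqr_sqrtr // ltW.
have A2 : 0 <= 1 - A ^+ 2 by nra.
have kr : 0 <= k <= 1.
  by have /andP[k0 k1] := inv_sqrt1Dsqr_itv m0; rewrite ltW // ltW.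
have A'1 : `|A'| <= 1.
  have : 0 <= 1 - `|A'| ^+ 2 by rewrite real_normK ?num_real // key divr_ge0 // ltW.
  by have := normr_ge0 A'; nra.
apply: (acos_le_scale _ _ kr); rewrite ?normr_ge0 ?real_normK ?num_real //=.
  by rewrite ler_norml.
by rewrite key k2 mulrC ler_wpM2r // lef_pV2 ?posrE ?(lt_le_trans m2 mW).
Qed.

End Update.

Section NormalizedUpdate.
Variables (R : realType) (d : nat) (ui uj : 'rV[R]_d) (F : R).
Hypotheses (hi : on_sphere ui) (hj : on_sphere uj) (AF : 0 <= dotp ui uj * F).

Let w := ui + F *: uj.

Lemma dotp_update_self : dotp w w = 1 + 2 * dotp ui uj * F + F ^+ 2.
Proof.
by rewrite /w dotpDl !dotpDr !dotpZl !dotpZr hi hj (dotpC uj ui); ring.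
Qed.

Let w_gt0 : 0 < dotp w w.
Proof. by rewrite dotp_update_self updated_denom_gt0. Qed.

Lemma normalized_update_on_sphere : on_sphere ((enorm w)^-1 *: w).
Proof.
rewrite /on_sphere dotpZl dotpZr /enorm mulrA -expr2 exprVn sqr_sqrtr ?ltW //.
by rewrite mulVf // gt_eqF.
Qed.

Lemma dotp_normalized_update :
  dotp ((enorm w)^-1 *: w) uj = updated_dotp (dotp ui uj) F.
Proof.
by rewrite dotpZl /w dotpDl dotpZl hj mulr1 /enorm dotp_update_self mulrC.
Qed.

End NormalizedUpdate.

Section Stability.
Variables (R : realType) (f : R -> R).
Hypothesis f_stable : stable f.

Lemma stable_mul_ge0 A : -1 <= A <= 1 -> 0 <= A * f A.
Proof.
by move=> Ar; rewrite -sgr_ge0 sgrM (proj2 f_stable _ Ar) -expr2 sqr_ge0.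
Qed.

Lemma stable_norm_bounded_below s : 0 < s <= 1 ->
  exists2 m : R, 0 < m & forall A, s <= `|A| <= 1 -> m <= `|f A|.
Proof.
move=> /andP[s0 s1]; have [fc fsg] := f_stable.
have sub_pos : (`[s, 1] `<=` `[-1, 1])%classic.
  move=> x; rewrite /= !in_itv /= => /andP[sx ->]; rewrite andbT.
  by rewrite (le_trans _ sx) // (le_trans _ (ltW s0)) // lerN10.
have sub_neg : (`[-1, - s] `<=` `[-1, 1])%classic.
  move=> x; rewrite /= !in_itv /= => /andP[-> xs] /=; lra.
have [c1 c1_itv c1_min] := EVT_min s1 (continuous_subspaceW sub_pos fc).
have [c2 c2_itv c2_max] : exists2 c, c \in `[-1, - s] &
    forall t, t \in `[-1, - s] -> f t <= f c.
  by apply: EVT_max; [lra | exact: continuous_subspaceW sub_neg fc].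
have fc1 : 0 < f c1.
  move: c1_itv (sub_pos _ c1_itv); rewrite /= !in_itv /= => /andP[sc1 _] c1r.
  by rewrite -sgr_gt0 fsg // sgr_gt0 (lt_le_trans s0).
have fc2 : f c2 < 0.
  move: c2_itv (sub_neg _ c2_itv); rewrite /= !in_itv /= => /andP[_ c2s] c2r.
  by rewrite -sgr_lt0 fsg // sgr_lt0 (le_lt_trans c2s) // oppr_lt0.
exists (Num.min (f c1) (- f c2)); first by rewrite lt_min fc1 oppr_gt0.
move=> A /andP[sA]; rewrite ler_norml => /andP[A_ge A_le].
have [A0|A0] := leP 0 A.
- rewrite ger0_norm // in sA.
  have fA : f c1 <= f A by apply: c1_min; rewrite in_itv /= sA A_le.
  by rewrite ge_min ger0_norm ?fA // (le_trans (ltW fc1)).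
- rewrite ltr0_norm // in sA.
  have fA : f A <= f c2 by apply: c2_max; rewrite in_itv /= A_ge lerNr.
  by rewrite ge_min ler0_norm ?lerN2 ?fA ?orbT // (le_trans fA (ltW fc2)).
Qed.

End Stability.

Unset Implicit Arguments. Set Strict Implicit.

Theorem mainTheorem19 (R : realType) (f : R -> R) :
  stable f ->
  forall delta : R, 0 < delta ->
  exists c0 : R, 0 < c0 < 1 /\
    forall (d : nat) (ui uj : 'rV[R]_d),
      on_sphere ui -> on_sphere uj ->
      eff_angle ui uj <= pi / 2 - delta ->
      let w := ui + f (dotp ui uj) *: uj in
      let ui' := (enorm w)^-1 *: w in
      eff_angle ui' uj <= c0 * eff_angle ui uj.
Proof.
move=> f_stable delta delta0.
have pihalf0 : 0 < pi / 2 :> R by rewrite divr_gt0 ?pi_gt0.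
pose t := pi / 2 - Num.min delta (pi / 2).
have t_itv : 0 <= t < pi / 2.
  by rewrite subr_ge0 ge_min lexx orbT /= ltrBlDr ltrDl lt_min delta0.
have s_itv : 0 < cos t <= 1.
  rewrite cos_le1 andbT cos_gt0_pihalf //; case/andP: t_itv => t0 ->.
  by rewrite andbT (lt_le_trans _ t0) // oppr_lt0.
have [m m0 f_ge] := stable_norm_bounded_below f_stable s_itv.
exists (Num.sqrt (1 + m ^+ 2))^-1; split; first exact: inv_sqrt1Dsqr_itv.
move=> d ui uj hi hj heff /=.
have Ar := dotp_sphere_itv hi hj; have AF := stable_mul_ge0 f_stable Ar.
rewrite (eff_angle_sphere hi hj) in heff *.
rewrite eff_angle_sphere //; last exact: normalized_update_on_sphere.
rewrite dotp_normalized_update //.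
apply: acos_updated_dotp_le => //; apply: f_ge; rewrite ler_norml Ar andbT.
apply: cos_le_of_acos_le (le_trans heff _); last by rewrite lerB // ge_min lexx.
  by rewrite ler_norml Ar andbT (le_trans _ (normr_ge0 _)) // lerN10.
by case/andP: t_itv => -> /ltW /le_trans; apply; exact: pihalf_lepi.
Qed.
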